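(* Let $q\in(0,\tfrac12)$ and let $T\sim U(0,1)$, $S\sim U(-1,0)$ be independent. Let $p_3^{SH}$ be the probability that the polynomial $$P_{T,S}(x)=(T+S-1)x^3+\big(1-T-2S+q(S-1-T)\big)x^2+\big(S+q(T-S)\big)x$$ has exactly three distinct roots in $[0,1]$. Then $$ p_3^{SH}= \begin{cases} 1-\dfrac{q}{2(1-q)}-\dfrac{1}{1-2q}\Big[\dfrac{(3\sqrt{q}+2)^2\sqrt{q}\,(5q^{3/2}+3q^2-9q-3\sqrt{q}+4)}{12(\sqrt{q}+1)^3}+\dfrac{-27 q^3-18q^2-32\sqrt{1-2q}\,q+48q+16\sqrt{1-2q}-16}{12q}\Big], & 0<q\leq \tfrac49,\\[3mm] 1-\dfrac{q}{2(1-q)}-\dfrac{8\sqrt{q}\,(1-2q)^2}{3(1-q)^3}, & \tfrac49<q<\tfrac12. \end{cases} $$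
   Context: This models the replicator–mutator dynamics of a two-player two-strategy Stag Hunt game with payoff entries $a_{11}=1$, $a_{22}=0$, $a_{21}=T$, $a_{12}=S$ and symmetric mutation probability $q$; the equilibria of the dynamics are exactly the distinct roots in $[0,1]$ of $P_{T,S}$, and ''the game has $k$ equilibria'' means $P_{T,S}$ has exactly $k$ distinct roots in $[0,1]$. *)

From HB Require Import structures.
From mathcomp Require Import all_boot all_order all_algebra.
From mathcomp Require Import all_classical all_reals all_analysis.
Set Implicit Arguments. Unset Strict Implicit. Unset Printing Implicit Defensive.
Import Order.TTheory GRing.Theory Num.Theory.
Local Open Scope ring_scope.
Local Open Scope classical_set_scope.

Definition P_TS {R : realType} (q t s x : R) : R :=
  (t + s - 1) * x ^+ 3
  + (1 - t - 2 * s + q * (s - 1 - t)) * x ^+ 2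
  + (s + q * (t - s)) * x.

Definition three_roots {R : realType} (q t s : R) : Prop :=
  exists x1 x2 x3 : R,
    [/\ x1 != x2, x1 != x3 & x2 != x3] /\
    [/\ 0 <= x1 <= 1, 0 <= x2 <= 1 & 0 <= x3 <= 1] /\
    [/\ P_TS q t s x1 = 0, P_TS q t s x2 = 0 & P_TS q t s x3 = 0] /\
    (forall x : R, 0 <= x <= 1 -> P_TS q t s x = 0 ->
       x = x1 \/ x = x2 \/ x = x3).

(* The event {exactly three equilibria} as a subset of the sample space of
   (T,S) in R x R, restricted to the support (0,1) x (-1,0) of the joint law. *)
Definition event3 {R : realType} (q : R) : set (R * R) :=
  [set ts | 0 < ts.1 < 1 /\ -1 < ts.2 < 0 /\ three_roots q ts.1 ts.2].

(* p_3^{SH}: with T ~ U(0,1), S ~ U(-1,0) independent, the joint law of (T,S)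
   has density 1 on (0,1) x (-1,0) w.r.t. the product Lebesgue measure, so the
   probability of the event is its product Lebesgue measure. *)
Definition p3SH {R : realType} (q : R) : \bar R :=
  ((@lebesgue_measure R) \x (@lebesgue_measure R))%E (event3 q).

Definition p3SH_formula {R : realType} (q : R) : R :=
  let r := Num.sqrt q in
  if q <= 4 / 9 then
    1 - q / (2 * (1 - q))
    - (1 - 2 * q)^-1 *
      ( (3 * r + 2) ^+ 2 * r * (5 * q * r + 3 * q ^+ 2 - 9 * q - 3 * r + 4)
          / (12 * (r + 1) ^+ 3)
      + (- 27 * q ^+ 3 - 18 * q ^+ 2 - 32 * Num.sqrt (1 - 2 * q) * q + 48 * q
         + 16 * Num.sqrt (1 - 2 * q) - 16) / (12 * q))
  else
    1 - q / (2 * (1 - q)) - 8 * r * (1 - 2 * q) ^+ 2 / (3 * (1 - q) ^+ 3).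

(* Since P_{T,S}(x) = x Q(x) with Q a concave quadratic, and Q(1) = -q < 0, the
   dynamics has three equilibria in [0,1] exactly when Q has two distinct roots
   in (0,1), i.e. when Q(0) = c < 0 and the discriminant D of Q is positive
   (the vertex of Q then automatically lies in (0,1)).  For fixed t in (0,1),
   c < 0 means s < s_hi(t) := -qt/(1-q) and D > 0 means s > s_lo(t), where
   s_lo(t) = (2 sqrt((1-2q)t) - (1-q)(1+t))/q is the lower branch of D = 0.
   Hence the t-section of the event is the interval ]max(-1, s_lo t), s_hi t[
   and, by Cavalieri's principle, p_3 is the integral over t in (0,1) of its
   length.  Writing w = sqrt t, s_lo(t) + 1 is a concave quadratic in w with
   roots w1 < w2, so the lower end of the section is s_lo exactly for
   w1 < sqrt t < w2.  The integral thus splits at w1^2 and min(1, w2^2)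
   (w2 >= 1 iff q <= 4/9); each piece has an explicit primitive in t and
   sqrt t, whose values give the two closed forms. *)
From HB Require Import structures.
From mathcomp Require Import all_boot all_order all_algebra.
From mathcomp Require Import all_classical all_reals all_analysis.
From mathcomp Require Import measurable_realfun ring lra.
Import numFieldNormedType.Exports.
Import Order.TTheory GRing.Theory Num.Theory.
Set Implicit Arguments. Unset Strict Implicit.
Local Open Scope ring_scope.

Section Quadratic.
Variable R : rcfType.
Implicit Types a b c x : R.

Definition quad a b c x := a * x ^+ 2 + b * x + c.
Definition discr a b c := b ^+ 2 - 4 * a * c.

Lemma quad_vieta a b c (y1 y2 : R) : y1 != y2 ->
  quad a b c y1 = 0 -> quad a b c y2 = 0 ->
  c = a * y1 * y2 /\ discr a b c = a ^+ 2 * (y1 - y2) ^+ 2.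
Proof.
rewrite /quad /discr => y12 e1 e2.
have eb : b = - a * (y1 + y2).
  have : (y1 - y2) * (a * (y1 + y2) + b) = 0.
    have -> : (y1 - y2) * (a * (y1 + y2) + b) =
      (a * y1 ^+ 2 + b * y1 + c) - (a * y2 ^+ 2 + b * y2 + c) by ring.
    by rewrite e1 e2 subrr.
  move/eqP; rewrite mulf_eq0 subr_eq0 (negbTE y12) /= addr_eq0 => /eqP h.
  by rewrite -[b]opprK -h; ring.
have ec : c = a * y1 * y2.
  transitivity ((a * y1 ^+ 2 + b * y1 + c) - a * y1 ^+ 2 - b * y1); first ring.
  by rewrite e1 eb; ring.
by split => //; rewrite eb ec; ring.
Qed.

Lemma quad_factor a b c : a != 0 -> 0 <= discr a b c ->
  let d := Num.sqrt (discr a b c) in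
  forall x,
    quad a b c x = a * ((x - (b - d) / (- (2 * a))) * (x - (b + d) / (- (2 * a)))).
Proof.
move=> a0 D0 d x; have dd : d ^+ 2 = discr a b c by rewrite sqr_sqrtr.
have -> : c = (b ^+ 2 - d ^+ 2) / (4 * a) by rewrite dd /discr; field.
by rewrite /quad; field.
Qed.

Definition three_zeros_01 (f : R -> R) : Prop :=
  exists x1 x2 x3 : R,
    [/\ x1 != x2, x1 != x3 & x2 != x3] /\
    [/\ 0 <= x1 <= 1, 0 <= x2 <= 1 & 0 <= x3 <= 1] /\
    [/\ f x1 = 0, f x2 = 0 & f x3 = 0] /\
    (forall x : R, 0 <= x <= 1 -> f x = 0 -> x = x1 \/ x = x2 \/ x = x3).

(* If x Q(x), Q concave, has three zeros in [0,1], then two of them are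
   distinct positive roots of Q: by Vieta, Q(0) < 0 and Q has positive
   discriminant. *)
Lemma three_zeros_01_cubic a b c : a < 0 ->
  three_zeros_01 (fun x => x * quad a b c x) -> c < 0 /\ 0 < discr a b c.
Proof.
move=> a0 [x1 [x2 [x3 [[n12 n13 n23] [[i1 i2 i3] [[e1 e2 e3] _]]]]]].
have root_quad x : x != 0 -> x * quad a b c x = 0 -> quad a b c x = 0.
  by move=> xn /eqP; rewrite mulf_eq0 (negbTE xn) => /eqP.
have two_pos_roots y1 y2 : y1 != y2 -> 0 <= y1 <= 1 -> 0 <= y2 <= 1 ->
    y1 != 0 -> y2 != 0 -> y1 * quad a b c y1 = 0 -> y2 * quad a b c y2 = 0 ->
    c < 0 /\ 0 < discr a b c.
  move=> y12 /andP[y10 _] /andP[y20 _] y1n y2n f1 f2.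
  have [ec eD] := quad_vieta y12 (root_quad _ y1n f1) (root_quad _ y2n f2).
  have y1p : 0 < y1 by rewrite lt0r y1n.
  have y2p : 0 < y2 by rewrite lt0r y2n.
  split; first by rewrite ec -mulrA; have := mulr_gt0 y1p y2p; nra.
  rewrite eD; apply: mulr_gt0; first by rewrite exprn_even_gt0 //= lt_eqF.
  by rewrite exprn_even_gt0 //= subr_eq0.
have [x10|x1n] := eqVneq x1 0.
  by apply: two_pos_roots n23 i2 i3 _ _ e2 e3; rewrite eq_sym -x10.
have [x20|x2n] := eqVneq x2 0.
  by apply: two_pos_roots n13 i1 i3 x1n _ e1 e3; rewrite eq_sym -x20.
exact: two_pos_roots n12 i1 i2 x1n x2n e1 e2.
Qed.

Lemma cubic_three_zeros_01 a b c :
  a < 0 -> c < 0 -> 0 < b -> b + 2 * a < 0 -> a + b + c < 0 -> 0 < discr a b c ->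
  three_zeros_01 (fun x => x * quad a b c x).
Proof.
move=> a0 c0 b0 ab abc D0.
have fac := quad_factor (ltr0_neq0 a0) (ltW D0).
move: fac; set d := Num.sqrt _ => fac.
have d0 : 0 < d by rewrite sqrtr_gt0.
have dd : d ^+ 2 = b ^+ 2 - 4 * a * c by rewrite sqr_sqrtr // ltW.
set k := - (2 * a) in fac; have k0 : 0 < k by rewrite /k; lra.
set y1 := (b - d) / k in fac; set y2 := (b + d) / k in fac.
have db : d < b by nra.
have dab : d < - (2 * a) - b by nra.
have y10 : 0 < y1 by rewrite divr_gt0 // subr_gt0.
have y12 : y1 < y2 by rewrite ltr_pM2r ?invr_gt0 //; lra.
have y21 : y2 < 1 by rewrite ltr_pdivrMr // mul1r /k; lra.
exists 0, y1, y2; split; first by rewrite !lt_eqF // (lt_trans y10).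
split; first by rewrite lexx ler01 !ltW // (lt_trans y10, lt_trans y12).
split; first by split; rewrite fac ?subrr; ring.
move=> x _ /eqP; rewrite fac !mulf_eq0 (lt_eqF a0) /= !subr_eq0.
by case/orP => [/eqP->|/orP[/eqP->|/eqP->]]; auto.
Qed.

End Quadratic.

Section StagHunt.
Variable R : realType.
Variables q t s : R.
Hypothesis q_bounds : 0 < q < 1 / 2.
Hypothesis t_bounds : 0 < t < 1.
Hypothesis s_bounds : -1 < s < 0.

Definition sh_a := t + s - 1.
Definition sh_b := 1 - t - 2 * s + q * (s - 1 - t).
Definition sh_c := s + q * (t - s).

Lemma P_TS_quad : P_TS q t s = fun x => x * quad sh_a sh_b sh_c x.
Proof. by apply/funext => x; rewrite /P_TS /quad /sh_a /sh_b /sh_c; ring. Qed.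

Lemma sh_coeffs : [/\ sh_a < 0, sh_b + 2 * sh_a < 0 & sh_a + sh_b + sh_c = - q].
Proof.
move: q_bounds t_bounds s_bounds => /andP[q0 q1] /andP[t0 t1] /andP[s0 s1].
split; first by rewrite /sh_a; lra.
- have qt1 : q * t < q by rewrite -[X in _ < X]mulr1 ltr_pM2l.
  have qs : q * s < 0 by rewrite pmulr_rlt0.
  have -> : sh_b + 2 * sh_a = (t - 1) + q * s - q - q * t
    by rewrite /sh_a /sh_b; ring.
  have := mulr_gt0 q0 t0; lra.
- by rewrite /sh_a /sh_b /sh_c; ring.
Qed.

Lemma sh_b_gt0 : sh_c < 0 -> 0 < sh_b.
Proof.
move: q_bounds t_bounds => /andP[q0 q1] /andP[t0 t1] c0.
have h : (2 - q) * sh_c < 0 by nra.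
have h2 : 0 < (1 - 2 * q) * (1 - t) by apply: mulr_gt0; lra.
have : 0 < sh_b * (1 - q).
  have -> : sh_b * (1 - q) = - ((2 - q) * sh_c) + ((1 - 2 * q) * (1 - t) + q ^+ 2)
    by rewrite /sh_b /sh_c; ring.
  have := sqr_ge0 q; lra.
by rewrite pmulr_lgt0 //; lra.
Qed.

Lemma three_roots_iff :
  three_roots q t s <-> sh_c < 0 /\ 0 < discr sh_a sh_b sh_c.
Proof.
have [a0 ab abc] := sh_coeffs.
have three : three_roots q t s = three_zeros_01 (P_TS q t s) by [].
rewrite three P_TS_quad; split; first exact: three_zeros_01_cubic.
move=> [c0 D0]; apply: cubic_three_zeros_01 => //; first exact: sh_b_gt0.
by rewrite abc oppr_lt0; case/andP: q_bounds.
Qed.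

End StagHunt.

Section Boundaries.
Variable R : realType.
Variable q : R.
Hypothesis q_bounds : 0 < q < 1 / 2.

(* The curves c = 0 and (lower branch of) D = 0 in the (t,s)-plane. *)
Definition s_hi (t : R) := - (q * t) / (1 - q).
Definition s_lo (t : R) := (2 * Num.sqrt ((1 - 2 * q) * t) - (1 - q) * (1 + t)) / q.

Lemma sh_c_lt0_iff (t s : R) : sh_c q t s < 0 <-> s < s_hi t.
Proof.
move: q_bounds => /andP[q0 q1]; rewrite /s_hi /sh_c ltr_pdivlMr; last lra.
have -> : s + q * (t - s) = s * (1 - q) + q * t by ring.
by split; lra.
Qed.

(* The discriminant of Q, written so as to be compared with 4 (1-2q) t. *)
Lemma discr_sh (t s : R) : discr (sh_a t s) (sh_b q t s) (sh_c q t s) =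
  ((1 - q) * t + q * s + 1 - q) ^+ 2 - 4 * ((1 - 2 * q) * t).
Proof. by rewrite /discr /sh_a /sh_b /sh_c; ring. Qed.

Lemma two_sqrt_lt (X A : R) : 0 <= X -> 0 < A ->
  (2 * Num.sqrt X < A) <-> (4 * X < A ^+ 2).
Proof.
move=> X0 A0; have r0 := sqrtr_ge0 X; rewrite -[in 4 * X](sqr_sqrtr X0).
by split => h; nra.
Qed.

Lemma discr_gt0_iff (t s : R) : 0 < t < 1 -> -1 < s ->
  0 < discr (sh_a t s) (sh_b q t s) (sh_c q t s) <-> s_lo t < s.
Proof.
move: q_bounds => /andP[q0 q1] /andP[t0 t1] s0; rewrite /s_lo discr_sh.
have X0 : 0 <= (1 - 2 * q) * t by apply: mulr_ge0; lra.
have A0 : 0 < (1 - q) * t + q * s + 1 - q.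
  have : 0 < (1 - q) * t by apply: mulr_gt0; lra.
  have : - q < q * s by nra.
  lra.
rewrite ltr_pdivrMr // ltrBlDr.
have -> : s * q + (1 - q) * (1 + t) = (1 - q) * t + q * s + 1 - q by ring.
by rewrite (two_sqrt_lt X0 A0); split; lra.
Qed.

Lemma s_hi_bounds (t : R) : 0 < t < 1 -> -1 < s_hi t < 0.
Proof.
move: q_bounds => /andP[q0 q1] /andP[t0 t1]; rewrite /s_hi.
have qt : 0 < q * t by apply: mulr_gt0.
have qt1 : q * t < q by rewrite -[X in _ < X]mulr1 ltr_pM2l.
by rewrite ltr_pdivlMr ?ltr_pdivrMr; try lra; apply/andP; split; lra.
Qed.

(* The two curves do not cross above (0,1): s_hi - s_lo is a perfect square. *)
Lemma s_lo_lt_s_hi (t : R) : 0 < t < 1 -> s_lo t < s_hi t.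
Proof.
move: q_bounds => /andP[q0 q1] /andP[t0 t1].
have X0 : 0 <= (1 - 2 * q) * t by apply: mulr_ge0; lra.
have X1 : (1 - 2 * q) * t < (1 - q) ^+ 2.
  have : (1 - 2 * q) * t < 1 - 2 * q by rewrite -[X in _ < X]mulr1 ltr_pM2l //; lra.
  have := sqr_ge0 q; rewrite sqrrB; lra.
set X := (1 - 2 * q) * t in X0 X1 *.
have r0 := sqrtr_ge0 X; have rr := sqr_sqrtr X0.
set r := Num.sqrt X in r0 rr *.
have r1 : r < 1 - q by rewrite -rr in X1; nra.
have e : s_hi t - s_lo t = (1 - q - r) ^+ 2 / (q * (1 - q)).
  rewrite /s_hi /s_lo -/X -/r.
  have -> : (1 - q - r) ^+ 2 = (1 - q) ^+ 2 - 2 * (1 - q) * r + (1 - 2 * q) * t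
    by rewrite -/X -rr; ring.
  by field; rewrite !gt_eqF //; lra.
rewrite -subr_gt0 e; apply: divr_gt0; last by apply: mulr_gt0; lra.
by rewrite exprn_even_gt0 //= subr_eq0 gt_eqF.
Qed.

Local Open Scope classical_set_scope.

Lemma event3_section (t : R) : xsection (event3 q) t =
  if 0 < t < 1 then `]Num.max (-1) (s_lo t), s_hi t[ else set0.
Proof.
apply/seteqP; split => s; rewrite /xsection /event3 /= in_setE /=.
  move=> [ht [hs h3]]; rewrite ht /= in_itv /=.
  have [/sh_c_lt0_iff c0 D0] := (three_roots_iff q_bounds ht hs).1 h3.
  have := (discr_gt0_iff ht (andP hs).1).1 D0.
  by move: hs => /andP[s0 _] ?; rewrite gt_max s0 /=; apply/andP; split.
case: ifP => ht //=; rewrite in_itv /= gt_max => /andP[/andP[s0 gs] sh].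
have [h10 h11] := andP (s_hi_bounds ht).
have hs : -1 < s < 0 by rewrite s0 /=; lra.
do 2 split => //; apply/(three_roots_iff q_bounds ht hs); split.
  exact/sh_c_lt0_iff.
exact/(discr_gt0_iff ht s0).
Qed.

Definition section_length (t : R) := s_hi t - Num.max (-1) (s_lo t).

Lemma p3SH_integral :
  p3SH q = (\int[lebesgue_measure]_(t in `]0%R, 1%R[) (section_length t)%:E)%E.
Proof.
rewrite /p3SH /product_measure1 [RHS]integral_mkcond.
apply: eq_integral => t _ /=; rewrite event3_section patchE.
case: ifPn => ht; last by rewrite memNset ?measure0 //= in_itv /=; exact/negP.
rewrite mem_set /= ?in_itv // lebesgue_measure_itv /= ifT -?EFinD //.
by rewrite lte_fin gt_max s_lo_lt_s_hi // andbT; case/andP: (s_hi_bounds ht).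
Qed.

End Boundaries.

Section Primitives.
Variable R : realType.
Local Open Scope classical_set_scope.

Lemma integral_itv_split (f : R -> R) (a : itv_bound R) (x : R) (b : itv_bound R) :
  (a <= BLeft x)%O -> (BLeft x <= b)%O -> measurable_fun setT f ->
  (\int[lebesgue_measure]_(t in [set` Interval a b]) (f t)%:E =
   \int[lebesgue_measure]_(t in [set` Interval a (BLeft x)]) (f t)%:E +
   \int[lebesgue_measure]_(t in [set` Interval (BLeft x) b]) (f t)%:E)%E.
Proof.
move=> ax xb mf; rewrite (itv_bndbnd_setU ax xb) integral_setU //.
- by apply/measurable_EFinP; apply: (measurable_funS measurableT).
- apply/disj_setPS => z [/=]; rewrite !itv_boundlr => /andP[_ h1] /andP[h2 _].
  by move: h1 h2; rewrite !bnd_simp => /lt_geF ->.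
Qed.

Lemma integral_itv_primitive (F f g : R -> R) (a b : R) (b0 b1 : bool) :
  a <= b -> continuous F -> continuous f ->
  (forall x, a < x < b -> is_derive x 1 F (f x)) ->
  measurable_fun `]a, b[ g -> {in `]a, b[%R, g =1 f} ->
  (\int[lebesgue_measure]_(x in [set` Interval (BSide b0 a) (BSide b1 b)]) (g x)%:E
   = (F b - F a)%:E)%E.
Proof.
move=> ab cF cf dF mg gf.
have mf : measurable_fun `]a, b[ f.
  by apply: (measurable_funS measurableT) => //; exact: continuous_measurable_fun.
rewrite (@eq_integral_itv_bounded _ _ _ f g) //.
have mfE : measurable_fun `]a, b[ (EFin \o f) by exact/measurable_EFinP.
have [eab|nab] := eqVneq a b.
  by rewrite integral_itv_bndoo // -eab set_itvE integral_set0 subrr.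
have lab : a < b by rewrite lt_neqAle nab ab.
rewrite integral_itv_bndoo // -(@integral_itv_bndoo _ _ _ _ true false) //.
apply: continuous_FTC2 => //; first exact: continuous_subspaceT.
- split; first by move=> x; rewrite in_itv /= => /dF [].
  + by apply: cvg_at_right_filter; exact: cF.
  + by apply: cvg_at_left_filter; exact: cF.
- by move=> x; rewrite in_itv /= => /dF dFx; rewrite derive1E dFx.(derive_val).
Qed.

Definition sqrt_poly (al be ga de ep t : R) :=
  al * t ^+ 2 + be * t + ga * (t * Num.sqrt t) + de * Num.sqrt t + ep.

Lemma sqrt_poly_continuous (al be ga de ep : R) :
  continuous (sqrt_poly al be ga de ep).
Proof.
move=> x; rewrite /sqrt_poly.
have cs : Num.sqrt t @[t --> x] --> Num.sqrt x by exact: sqrt_continuous.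
have ci : t @[t --> x] --> x by [].
apply: cvgD; last exact: cvg_cst.
apply: cvgD; last by apply: cvgM => //; exact: cvg_cst.
apply: cvgD; last by apply: cvgM; [exact: cvg_cst | exact: cvgM].
by apply: cvgD; apply: cvgM; try exact: cvg_cst; try exact: ci; exact: cvgM.
Qed.

Lemma sqrt_poly_derive (al be ga ep x : R) : 0 < x ->
  is_derive x 1 (sqrt_poly al be ga 0 ep) (sqrt_poly 0 (2 * al) 0 (3 / 2 * ga) be x).
Proof.
move=> x0; have dsqrt := is_derive1_sqrt x0.
have did := @is_derive_id R R^o x 1.
have := is_deriveD (is_deriveD (is_deriveD (is_deriveD
  (is_deriveZ al (is_deriveX 2 did)) (is_deriveZ be did))
  (is_deriveZ ga (is_deriveM did dsqrt))) (is_deriveZ 0 dsqrt))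
  (is_derive_cst ep x 1).
move/is_derive_eq; apply.
have s0 : 0 < Num.sqrt x by rewrite sqrtr_gt0.
have ss : x = Num.sqrt x ^+ 2 by rewrite sqr_sqrtr // ltW.
rewrite /sqrt_poly /=; move: s0 ss; set r := Num.sqrt x => s0 ss.
by rewrite ss /GRing.scale /=; field; rewrite gt_eqF.
Qed.

Lemma integral_sqrt_poly (al be ga ep a b : R) (b0 b1 : bool) (g : R -> R) :
  0 <= a -> a <= b -> measurable_fun `]a, b[ g ->
  {in `]a, b[%R, g =1 sqrt_poly 0 (2 * al) 0 (3 / 2 * ga) be} ->
  (\int[lebesgue_measure]_(x in [set` Interval (BSide b0 a) (BSide b1 b)]) (g x)%:E
   = (sqrt_poly al be ga 0 ep b - sqrt_poly al be ga 0 ep a)%:E)%E.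
Proof.
move=> a0 ab mg gf.
apply: (integral_itv_primitive (f := sqrt_poly 0 (2 * al) 0 (3 / 2 * ga) be)) => //.
- exact: sqrt_poly_continuous.
- exact: sqrt_poly_continuous.
- by move=> x /andP[ax _]; apply: sqrt_poly_derive; apply: le_lt_trans ax.
Qed.

End Primitives.

Section SectionLength.
Variable R : realType.
Variable q : R.
Hypothesis q_bounds : 0 < q < 1 / 2.

(* In the variable w = sqrt t, s_lo(t) + 1 has roots w1 < w2. *)
Definition rho := Num.sqrt (1 - 2 * q).
Definition w1 := rho / (1 + Num.sqrt q).
Definition w2 := rho / (1 - Num.sqrt q).

Lemma sqrt_q_facts : [/\ 0 < Num.sqrt q, Num.sqrt q ^+ 2 = q, Num.sqrt q < 1,
  0 < rho & rho ^+ 2 = 1 - 2 * q].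
Proof.
move: q_bounds => /andP[q0 q1].
split; rewrite ?sqrtr_gt0 ?sqr_sqrtr //; try lra.
by rewrite -[X in _ < X]sqrtr1 ltr_sqrt //; lra.
Qed.

Lemma s_hi_sqrt_poly : s_hi q = sqrt_poly 0 (- q / (1 - q)) 0 0 0.
Proof.
move: q_bounds => /andP[q0 q1]; apply/funext => t; rewrite /s_hi /sqrt_poly.
by field; rewrite gt_eqF //; lra.
Qed.

Lemma s_lo_sqrt_poly :
  s_lo q = sqrt_poly 0 (- (1 - q) / q) 0 (2 * rho / q) (- (1 - q) / q).
Proof.
move: q_bounds => /andP[q0 q1]; apply/funext => t.
by rewrite /s_lo /sqrt_poly /rho sqrtrM; [field; rewrite gt_eqF | lra].
Qed.

Lemma s_lo_add1 (t : R) : 0 <= t ->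
  s_lo q t + 1 = - ((1 - q) * ((Num.sqrt t - w1) * (Num.sqrt t - w2))) / q.
Proof.
move=> t0; have [r0 rr r1 p0 pp] := sqrt_q_facts.
rewrite s_lo_sqrt_poly /sqrt_poly /w1 /w2.
have tw : t = Num.sqrt t ^+ 2 by rewrite sqr_sqrtr.
move: tw rr r0 r1 pp p0; set r := Num.sqrt q; set p := rho; set w := Num.sqrt t.
move=> tw rr r0 r1 pp p0; rewrite tw -rr.
have -> : (1 - r ^+ 2) * ((w - p / (1 + r)) * (w - p / (1 - r))) =
    (1 - r ^+ 2) * w ^+ 2 - 2 * p * w + p ^+ 2.
  by field; rewrite !gt_eqF //; lra.
by rewrite pp -rr; field; rewrite gt_eqF.
Qed.

Lemma w_facts : [/\ 0 < w1, w1 < w2, w1 < 1 & (q <= 4 / 9) = (1 <= w2)].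
Proof.
have [r0 rr r1 p0 pp] := sqrt_q_facts.
move: q_bounds => /andP[q0 q1]; rewrite /w1 /w2.
have p1 : rho < 1 by rewrite /rho -[X in _ < X]sqrtr1 ltr_sqrt //; lra.
split.
- by apply: divr_gt0 => //; lra.
- rewrite -subr_gt0.
  have -> : rho / (1 - Num.sqrt q) - rho / (1 + Num.sqrt q) =
      2 * rho * Num.sqrt q / ((1 + Num.sqrt q) * (1 - Num.sqrt q)).
    by field; rewrite !gt_eqF //; lra.
  by apply: divr_gt0; [rewrite !mulr_gt0 | apply: mulr_gt0; lra].
- by rewrite ltr_pdivrMr; lra.
- rewrite ler_pdivlMr // [in RHS]ler_pdivlMr ?subr_gt0 // mul1r.
  move: rr r0 r1 pp p0 p1; set r := Num.sqrt q; set p := rho.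
  move=> rr r0 r1 pp p0 p1; apply/idP/idP => h.
  + have hr : r <= 2 / 3 by rewrite -rr in h; nra.
    rewrite -subr_ge0; have : 0 <= p ^+ 2 - (1 - r) ^+ 2 by rewrite pp -rr; nra.
    nra.
  + have : (1 - r) ^+ 2 <= p ^+ 2 by nra.
    rewrite pp -rr => h2; have hr : r <= 2 / 3 by nra.
    nra.
Qed.

Lemma section_length_out (t : R) : 0 < t -> Num.sqrt t < w1 \/ w2 < Num.sqrt t ->
  section_length q t = s_hi q t + 1.
Proof.
move=> t0 h; have [w10 w12 _ _] := w_facts; have [q0 q1] := andP q_bounds.
have P0 : 0 < (Num.sqrt t - w1) * (Num.sqrt t - w2) by case: h => h; nra.
have : s_lo q t + 1 < 0.
  rewrite s_lo_add1 ?ltW // ltr_pdivrMr // mul0r oppr_lt0.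
  by apply: mulr_gt0 => //; lra.
by move=> hg; rewrite /section_length max_l ?opprK //; apply: ltW; lra.
Qed.

Lemma section_length_in (t : R) : 0 < t -> w1 < Num.sqrt t < w2 ->
  section_length q t = s_hi q t - s_lo q t.
Proof.
move=> t0 /andP[h1 h2]; have [w10 w12 _ _] := w_facts.
have [q0 q1] := andP q_bounds.
have P0 : (Num.sqrt t - w1) * (Num.sqrt t - w2) < 0 by nra.
have : 0 < s_lo q t + 1.
  rewrite s_lo_add1 ?ltW // ltr_pdivlMr // mul0r oppr_gt0.
  by rewrite pmulr_rlt0 //; lra.
by move=> hg; rewrite /section_length max_r //; apply: ltW; lra.
Qed.

Lemma section_length_measurable : measurable_fun setT (section_length q).
Proof.
have -> : section_length q = s_hi q \- ((fun=> -1) \max s_lo q) by [].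
have mpoly (al be ga de ep : R) : measurable_fun setT (sqrt_poly al be ga de ep).
  by apply: continuous_measurable_fun; exact: sqrt_poly_continuous.
apply: measurable_funB; first by rewrite s_hi_sqrt_poly.
by apply: measurable_maxr => //; rewrite s_lo_sqrt_poly.
Qed.

End SectionLength.

Section SectionIntegral.
Variable R : realType.
Variable q : R.
Hypothesis q_bounds : 0 < q < 1 / 2.
Local Open Scope classical_set_scope.

(* Primitive of s_hi + 1 (section length outside [w1^2, w2^2]). *)
Definition out_a := - q / (2 * (1 - q)).
Definition prim_out := sqrt_poly out_a 1 0 0 0.

(* Primitive of s_hi - s_lo (section length inside [w1^2, w2^2]). *)
Definition in_a := (- q / (1 - q) + (1 - q) / q) / 2.
Definition in_b := (1 - q) / q.
Definition in_c := - (4 / 3) * rho q / q.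
Definition prim_in := sqrt_poly in_a in_b in_c 0 0.

Lemma s_hi_add1_sqrt_poly (t : R) :
  s_hi q t + 1 = sqrt_poly 0 (2 * out_a) 0 (3 / 2 * 0) 1 t.
Proof.
move: q_bounds => /andP[q0 q1].
by rewrite /s_hi /sqrt_poly /out_a; field; rewrite gt_eqF //; lra.
Qed.

Lemma s_hi_sub_s_lo_sqrt_poly (t : R) :
  s_hi q t - s_lo q t = sqrt_poly 0 (2 * in_a) 0 (3 / 2 * in_c) in_b t.
Proof.
rewrite s_hi_sqrt_poly // s_lo_sqrt_poly //; move: q_bounds => /andP[q0 q1].
by rewrite /sqrt_poly /in_a /in_b /in_c; field; rewrite !gt_eqF //; lra.
Qed.

Definition t_in := w1 q ^+ 2.
Definition t_out := Num.min 1 (w2 q ^+ 2).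

Definition section_integral :=
  (prim_out t_in - prim_out 0) + (prim_in t_out - prim_in t_in)
  + (prim_out 1 - prim_out t_out).

Lemma integral_section_length :
  (\int[lebesgue_measure]_(t in `]0%R, 1%R[) (section_length q t)%:E =
   section_integral%:E)%E.
Proof.
have [w10 w12 w11 _] := w_facts q_bounds.
have w20 : 0 < w2 q := lt_trans w10 w12.
have t_in0 : 0 < t_in by rewrite exprn_gt0.
have t_in1 : t_in < 1 by rewrite expr_lt1 // ltW.
have t_in_out : t_in <= t_out.
  by rewrite le_min (ltW t_in1) ler_sqr ?nnegrE ?ltW.
have t_out1 : t_out <= 1 by rewrite ge_min lexx.
have mS := section_length_measurable q_bounds.
have mS' (a b : R) : measurable_fun `]a, b[ (section_length q).
  exact: measurable_funS mS.
have sqrt_lt (w t : R) : 0 < w -> (Num.sqrt t < w) = (t < w ^+ 2).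
  by move=> w0; rewrite -[RHS]ltr_sqrt ?exprn_gt0 // sqrtr_sqr ger0_norm ?ltW.
have lt_sqrt (w t : R) : 0 < w -> 0 < t -> (w < Num.sqrt t) = (w ^+ 2 < t).
  by move=> w0 t0; rewrite -[RHS]ltr_sqrt // sqrtr_sqr ger0_norm ?ltW.
rewrite (@integral_itv_split _ _ _ t_in) ?bnd_simp ?(ltW t_in1) //.
rewrite [X in (_ + X)%E](@integral_itv_split _ _ _ t_out) ?bnd_simp //.
rewrite (@integral_sqrt_poly R out_a 1 0 0 0 t_in _ _ _
    (lexx 0) (ltW t_in0)) //; last first.
  move=> t; rewrite in_itv /= => /andP[t0 t1].
  by rewrite section_length_out ?s_hi_add1_sqrt_poly // sqrt_lt // t1; left.
rewrite (@integral_sqrt_poly R in_a in_b in_c 0 t_in t_out _ _ _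
    (ltW t_in0) t_in_out) //; last first.
  move=> t; rewrite in_itv /= => /andP[t0 t1].
  have tp : 0 < t := lt_trans t_in0 t0.
  rewrite section_length_in ?s_hi_sub_s_lo_sqrt_poly // sqrt_lt // lt_sqrt //.
  by rewrite t0 /=; apply: (lt_le_trans t1); rewrite ge_min lexx orbT.
rewrite (@integral_sqrt_poly R out_a 1 0 0 t_out 1 _ _ _
    (le_trans (ltW t_in0) t_in_out) t_out1) //; last first.
  move=> t; rewrite in_itv /= => /andP[t0 t1].
  have tp : 0 < t.
    by apply: le_lt_trans t0; apply: le_trans t_in_out; apply: ltW.
  rewrite section_length_out ?s_hi_add1_sqrt_poly //; right.
  by rewrite lt_sqrt //; move: t0; rewrite gt_min => /orP[h|//]; lra.
by rewrite -!EFinD /section_integral addrA.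
Qed.

End SectionIntegral.

Section ClosedForm.
Variable R : realType.
Variable q : R.
Hypothesis q_bounds : 0 < q < 1 / 2.

Lemma sqrt_poly_at_sqr (al be ga ep w : R) : 0 <= w ->
  sqrt_poly al be ga 0 ep (w ^+ 2) =
  al * (w ^+ 2) ^+ 2 + be * w ^+ 2 + ga * w ^+ 3 + ep.
Proof. by move=> w0; rewrite /sqrt_poly sqrtr_sqr ger0_norm //; ring. Qed.

Lemma prim_out_at (u : R) : 0 < u ->
  prim_out q ((rho q / u) ^+ 2) =
  out_a q * ((1 - 2 * q) / u ^+ 2) ^+ 2 + (1 - 2 * q) / u ^+ 2.
Proof.
move=> u0; have [_ _ _ p0 pp] := sqrt_q_facts q_bounds.
by rewrite /prim_out sqrt_poly_at_sqr ?divr_ge0 ?ltW // expr_div_n pp; ring.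
Qed.

Lemma prim_in_at (u : R) : 0 < u ->
  prim_in q ((rho q / u) ^+ 2) = in_a q * ((1 - 2 * q) / u ^+ 2) ^+ 2
    + in_b q * ((1 - 2 * q) / u ^+ 2) - 4 / 3 * (1 - 2 * q) ^+ 2 / (q * u ^+ 3).
Proof.
move=> u0; have [_ _ _ p0 pp] := sqrt_q_facts q_bounds; have [q0 _] := andP q_bounds.
rewrite /prim_in sqrt_poly_at_sqr ?divr_ge0 ?ltW // expr_div_n pp /in_c -pp.
by field; rewrite !gt_eqF.
Qed.

Lemma prim_out_0 : prim_out q 0 = 0.
Proof. by rewrite /prim_out /sqrt_poly sqrtr0; ring. Qed.

Lemma sqrt_poly_at1 (al be ga ep : R) : sqrt_poly al be ga 0 ep 1 = al + be + ga + ep.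
Proof. by rewrite /sqrt_poly sqrtr1; ring. Qed.

(* For q <= 4/9 the middle piece of the integral extends up to t = 1. *)
Lemma section_integral_le49 : q <= 4 / 9 -> section_integral q = p3SH_formula q.
Proof.
move=> hq; have [r0 rr r1 p0 pp] := sqrt_q_facts q_bounds.
have [q0 q1] := andP q_bounds; have [w10 w12 _ hw2] := w_facts q_bounds.
have w20 : 0 <= w2 q by rewrite ltW // (lt_trans w10).
have t_out1 : t_out q = 1.
  by rewrite /t_out min_l // -(expr1n _ 2) ler_sqr ?nnegrE ?ler01 // -hw2.
have u1 : 0 < 1 + Num.sqrt q by lra.
rewrite /section_integral t_out1 subrr addr0 /t_in /w1 prim_out_at // prim_in_at //.
rewrite prim_out_0 /prim_in sqrt_poly_at1 /p3SH_formula hq /out_a /in_a /in_b /in_c.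
move: rr r0 r1 pp p0; rewrite /rho.
set r := Num.sqrt q; set p := Num.sqrt (1 - 2 * q) => rr r0 r1 pp p0.
by rewrite -rr; field; rewrite rr !gt_eqF //; lra.
Qed.

Lemma section_integral_gt49 : 4 / 9 < q -> section_integral q = p3SH_formula q.
Proof.
move=> hq; have [r0 rr r1 p0 pp] := sqrt_q_facts q_bounds.
have [q0 q1] := andP q_bounds; have [w10 w12 _ hw2] := w_facts q_bounds.
have w20 : 0 <= w2 q by rewrite ltW // (lt_trans w10).
have t_out_w2 : t_out q = w2 q ^+ 2.
  rewrite /t_out min_r // -(expr1n _ 2) ler_sqr ?nnegrE ?ler01 //.
  by apply: ltW; rewrite ltNge -hw2 -ltNge.
have u1 : 0 < 1 + Num.sqrt q by lra.
have u2 : 0 < 1 - Num.sqrt q by lra.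
rewrite /section_integral t_out_w2 /t_in /w1 /w2 !prim_out_at // !prim_in_at //.
rewrite prim_out_0 /prim_out sqrt_poly_at1 /p3SH_formula ifN -?ltNge //.
rewrite /out_a /in_a /in_b /in_c.
move: rr r0 r1 pp p0; rewrite /rho.
set r := Num.sqrt q; set p := Num.sqrt (1 - 2 * q) => rr r0 r1 pp p0.
by rewrite -rr; field; rewrite rr !gt_eqF //; lra.
Qed.

End ClosedForm.

Unset Implicit Arguments.

Theorem theorem2p3 (R : realType) (q : R) (hq0 : 0 < q) (hq1 : q < 1 / 2) :
  p3SH q = (p3SH_formula q)%:E.
Proof.
have hq : 0 < q < 1 / 2 by rewrite hq0.
rewrite p3SH_integral // integral_section_length //; congr EFin.
have [le49|gt49] := leP q (4 / 9).
  exact: section_integral_le49.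
exact: section_integral_gt49.
Qed.
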